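(* For every object $(G,\hat q,f)$ of $\mathsf{PSM}$, the kernel of the group homomorphism $F:\mathrm{Aut}_{\mathsf{PSM}}(G,\hat q,f)\to\mathrm{Aut}_{\mathsf{ASCS}}(F(G,\hat q,f))$ is isomorphic to $\mathbb{Z}_2$.
   Context: A quadratic form on a finite abelian group $G$ is a map $q:G\to\mathbb{Q}/\mathbb{Z}$ such that $b(x,y):=q(x+y)-q(x)-q(y)+q(0)$ is bilinear; non-degenerate if $b$ is; homogeneous if $q(nx)=n^2q(x)$ for $n\in\mathbb{Z}$. $q\sim q'$ if there is $\Delta\in G$ with $q(g)=q'(g-\Delta)$ for all $g$; $[q]$ is the class. Gauss sum: $\tau^+(G,q)=|G|^{-1/2}\sum_{g\in G}e^{2\pi i q(g)}$. $\mathsf{ASCS}$: objects $(\mathscr{D},[q],\sigma)$ with $\mathscr{D}$ finite abelian, $[q]$ a class of non-degenerate quadratic forms on $\mathscr{D}$ with no representative satisfying $q(0)=0$, $\sigma\in\mathbb{Z}_8$, and $\tau^+(\mathscr{D},q)=e^{2\pi i\sigma/8}$; morphisms are group isomorphisms $\phi$ with $[q_2\circ\phi]=[q_1]$. $\mathsf{PSM}$: objects $(G,\hat q,f)$ with $G$ finite abelian, $\hat q$ a non-degenerate homogeneous quadratic form, $f\in G$ with $2f=0$, $\hat q(f)=\tfrac12$; morphisms are group isomorphisms $\phi$ with $\hat q_2\circ\phi=\hat q_1$, $\phi(f_1)=f_2$. Functor $F$: for $(G,\hat q,f)$ with bilinear form $\hat b$, $G_0=\{g:\hat b(g,f)=0\}$,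 $\mathscr{D}=G_0/\langle f\rangle$, $a\in G\setminus G_0$, $q_a([x])=\hat q(x-a)$ for $x\in G_0$, $\sigma\in\mathbb{Z}_8$ with $\tau^+(G,\hat q)=e^{2\pi i\sigma/8}$; $F(G,\hat q,f)=(\mathscr{D},[q_a],\sigma)$ and $F(\phi)$ is the isomorphism induced on $G_0/\langle f\rangle$. *)

From HB Require Import structures.
From mathcomp Require Import all_boot all_order all_algebra all_fingroup.
From mathcomp Require Import boolp.
Set Implicit Arguments. Unset Strict Implicit. Unset Printing Implicit Defensive.
Import Order.TTheory GRing.Theory Num.Theory.
Local Open Scope ring_scope.

(* Q/Z is modelled by rat modulo the integers: a quadratic form G -> Q/Z is
   represented by any lift q : G -> rat, and all equalities in Q/Z are
   equalities modulo Z. *)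
Definition eqQZ (a b : rat) : bool := (a - b) \is a Num.int.

Section PSM.
Variable G : finZmodType.
Implicit Types (q : G -> rat) (f x y z : G).

Definition bil q x y : rat := q (x + y) - q x - q y + q 0.

Definition is_quadratic_form q : Prop :=
  (forall x y z, eqQZ (bil q (x + y) z) (bil q x z + bil q y z)) /\
  (forall x y z, eqQZ (bil q x (y + z)) (bil q x y + bil q x z)).

Definition nondegenerate q : Prop :=
  forall x, (forall y, eqQZ (bil q x y) 0) -> x = 0.

Definition homogeneous q : Prop :=
  forall (n : int) x, eqQZ (q (x *~ n)) ((n ^+ 2)%:~R * q x).

Definition PSM_object q f : Prop :=
  [/\ is_quadratic_form q, nondegenerate q, homogeneous q,
      f *+ 2 = 0 & eqQZ (q f) (1 / 2)].

Definition PSM_aut q f (phi : {perm G}) : Prop :=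
  [/\ (forall x y, phi (x + y) = phi x + phi y),
      (forall x, eqQZ (q (phi x)) (q x)) & phi f = f].

Definition G0 q f (x : G) : Prop := eqQZ (bil q x f) 0.

(* F(phi) is the identity of D = G_0 / <f>: phi(x) is in x + <f> for x in G_0 *)
Definition F_is_id q f (phi : {perm G}) : Prop :=
  forall x, G0 q f x -> exists n : int, phi x - x = f *~ n.

Definition kerF q f : {set {perm G}} :=
  [set phi : {perm G} | `[< PSM_aut q f phi /\ F_is_id q f phi >]].

End PSM.

From HB Require Import structures.
From mathcomp Require Import all_boot all_order all_algebra all_fingroup.
From mathcomp Require Import boolp.
From mathcomp Require Import all_solvable ring zify.
Import GRing.Theory Num.Theory.
Set Implicit Arguments.
Unset Strict Implicit.
Unset Printing Implicit Defensive.
Local Open Scope ring_scope.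

(* Let G_0 = f^⊥.  Since 2f = 0, b(x, f) is 0 or 1/2 modulo Z for every x, and
   x |-> b(x, f) is a homomorphism, so G_0 has index 2 (index 1 is excluded by
   non-degeneracy, as f <> 0).  An automorphism phi in the kernel of F fixes G_0
   pointwise, because phi x = x + f would change q(x) by q(f) + b(x, f) - q(0)
   = 1/2.  Hence d := phi - id vanishes on G_0 and is constant, equal to d(a),
   on the other coset a + G_0; d(a) is orthogonal to G_0, and
   2 b(a, d(a)) = b(2a, d(a)) = 0 because 2a lies in G_0.  By non-degeneracy,
   b(a, d(a)) = 0 forces d(a) = 0 and b(a, d(a)) = 1/2 forces d(a) = f: phi is
   the identity or the involution adding f on G \ G_0. *)

(* Computations modulo Z: the goal is first rewritten, by [ring] or [field],
   as a sum of terms known to be integral, which this tactic then closes. *)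
Ltac Qint_lincomb :=
  intros; repeat first [ done | apply: rpred0 | apply: rpred1
               | apply: rpredD | apply: rpredMn | rewrite rpredN ].

Lemma Qint_half : (1 / 2 : rat) \is a Num.int = false.
Proof. by rewrite Qint_def. Qed.

Lemma Qint_mulr2n (r : rat) :
  r *+ 2 \is a Num.int -> r \is a Num.int \/ r - 1 / 2 \is a Num.int.
Proof.
move=> /intrP[m r2m]; have -> : r = m%:~R / 2 by rewrite -r2m mulr2n; field.
have [m_even | m_odd] : (m %% 2 = 0 \/ m %% 2 = 1)%Z by lia.
- by left; apply/intrP; exists (m %/ 2)%Z; rewrite {1}(divz_eq m 2) m_even;
     rewrite addr0 intrM /=; field.
- by right; apply/intrP; exists (m %/ 2)%Z; rewrite {1}(divz_eq m 2) m_odd;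
     rewrite intrD intrM /=; field.
Qed.

Lemma eqQZxx (r : rat) : eqQZ r r.
Proof. by rewrite /eqQZ subrr. Qed.

Lemma eqQZ0 (r : rat) : eqQZ r 0 = (r \is a Num.int).
Proof. by rewrite /eqQZ subr0. Qed.

Lemma mulrz_order2 (V : zmodType) (x : V) (n : int) :
  x *+ 2 = 0 -> x *~ n = 0 \/ x *~ n = x.
Proof.
move=> x2; rewrite (divz_eq n 2) mulrzDr -mulrzA_C.
rewrite (_ : x *~ 2 = 0) // mul0rz add0r.
have [-> | ->] : (n %% 2 = 0 \/ n %% 2 = 1)%Z by lia.
- by left; rewrite mulr0z.
- by right; rewrite mulr1z.
Qed.

Section Bil.
Variables (G : finZmodType) (q : G -> rat).

Lemma bilC x y : bil q x y = bil q y x.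
Proof. by rewrite /bil (addrC y x); ring. Qed.

Lemma bilr0 x : bil q x 0 = 0.
Proof. by rewrite /bil addr0; ring. Qed.

Lemma qD x y : q (x + y) = q x + q y + bil q x y - q 0.
Proof. by rewrite /bil; ring. Qed.

Lemma PSM_aut_bil f (phi : {perm G}) x y : PSM_aut q f phi ->
  bil q (phi x) (phi y) - bil q x y \is a Num.int.
Proof.
case=> phiD phiq _; have phi0 : phi 0 = 0.
  by apply: (addrI (phi 0)); rewrite -phiD !addr0.
have := phiq (x + y); have := phiq x; have := phiq y; rewrite /eqQZ phiD.
have := phiq 0; rewrite /eqQZ phi0 => *.
have -> : bil q (phi x) (phi y) - bil q x y = (q (phi x + phi y) - q (x + y))
   - (q (phi x) - q x) - (q (phi y) - q y) + (q 0 - q 0) by rewrite /bil; ring.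
by Qint_lincomb.
Qed.

End Bil.

Section KernelOfF.
Variables (G : finZmodType) (q : G -> rat) (f : G).
Hypothesis PSM_qf : PSM_object q f.

Local Notation B := (bil q).
Local Notation inG0 x := (B x f \is a Num.int).

Lemma bilDl x y z : B (x + y) z - (B x z + B y z) \is a Num.int.
Proof. by case: PSM_qf => [[bilD _] _ _ _ _]; apply: bilD. Qed.

Lemma bilDr x y z : B x (y + z) - (B x y + B x z) \is a Num.int.
Proof. by case: PSM_qf => [[_ bilD] _ _ _ _]; apply: bilD. Qed.

Lemma bilBr x y z : B x (y - z) - (B x y - B x z) \is a Num.int.
Proof.
have := bilDr x (y - z) z; rewrite subrK => bilD.
have -> : B x (y - z) - (B x y - B x z)
  = - (B x y - (B x (y - z) + B x z)) by ring.
by Qint_lincomb.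
Qed.

Lemma bil_nondeg x : (forall y, B y x \is a Num.int) -> x = 0.
Proof.
case: PSM_qf => [_ nondeg _ _ _] x_perp; apply: nondeg => y.
by rewrite eqQZ0 bilC.
Qed.

Lemma f_order2 : f *+ 2 = 0.
Proof. by case: PSM_qf. Qed.

Lemma qf_half : q f - 1 / 2 \is a Num.int.
Proof. by case: PSM_qf. Qed.

Lemma q0_int : q 0 \is a Num.int.
Proof.
case: PSM_qf => [_ _ homog _ _]; have := homog 0 0.
by rewrite /eqQZ mulr0z expr0n /= mul0r subr0.
Qed.

Lemma inG0f : inG0 f.
Proof.
have -> : B f f = q 0 *+ 2 - 1 - (q f - 1 / 2) *+ 2.
  by rewrite /bil -mulr2n f_order2; field.
by have := qf_half; have := q0_int; Qint_lincomb.
Qed.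

Lemma qDf x : q (x + f) - q x - (B x f + 1 / 2) \is a Num.int.
Proof.
have -> : q (x + f) - q x - (B x f + 1 / 2) = (q f - 1 / 2) - q 0 by rewrite qD; ring.
by have := qf_half; have := q0_int; Qint_lincomb.
Qed.

Lemma notG0_half x : ~~ inG0 x -> B x f - 1 / 2 \is a Num.int.
Proof.
move=> xG0; have [xG0' | //] : inG0 x \/ B x f - 1 / 2 \is a Num.int.
  apply: Qint_mulr2n; have := bilDr x f f.
  by rewrite -mulr2n f_order2 bilr0 sub0r rpredN mulr2n.
by rewrite xG0' in xG0.
Qed.

Lemma inG0D x y : inG0 (x + y) = (inG0 x == inG0 y).
Proof.
have bilD := bilDl x y f.
have Bxy : B (x + y) f = (B (x + y) f - (B x f + B y f)) + B x f + B y f by ring.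
case: (boolP (inG0 x)) => xG0; case: (boolP (inG0 y)) => yG0 /=.
- by rewrite Bxy; Qint_lincomb.
- apply/negbTE; apply: contra yG0 => xyG0.
  have -> : B y f = B (x + y) f - (B (x + y) f - (B x f + B y f)) - B x f by ring.
  by Qint_lincomb.
- apply/negbTE; apply: contra xG0 => xyG0.
  have -> : B x f = B (x + y) f - (B (x + y) f - (B x f + B y f)) - B y f by ring.
  by Qint_lincomb.
- have -> : B (x + y) f = (B (x + y) f - (B x f + B y f))
    + (B x f - 1 / 2) + (B y f - 1 / 2) + 1 by field.
  by have := notG0_half xG0; have := notG0_half yG0; Qint_lincomb.
Qed.

Lemma inG0_addf x : inG0 (x + f) = inG0 x.
Proof. by rewrite inG0D inG0f eqb_id. Qed.

Lemma inG0_subr w a : ~~ inG0 w -> ~~ inG0 a -> inG0 (w - a).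
Proof.
move=> /negbTE w_notG0 /negbTE a_notG0; have := inG0D (w - a) a.
by rewrite subrK w_notG0 a_notG0; case: (inG0 (w - a)).
Qed.

Lemma f_neq0 : f != 0.
Proof.
apply: contraFneq Qint_half => f0.
have -> : 1 / 2 = q 0 - (q f - 1 / 2) by rewrite f0; ring.
by have := qf_half; have := q0_int; Qint_lincomb.
Qed.

Lemma exists_notG0 : exists a, ~~ inG0 a.
Proof.
have [/existsP[a a_notG0] | /existsPn all_G0] := boolP [exists a, ~~ inG0 a].
  by exists a.
by case/eqP: f_neq0; apply: bil_nondeg => y; have := all_G0 y; rewrite negbK.
Qed.

Definition twist_fun x := if inG0 x then x else x + f.

Lemma twist_funK : involutive twist_fun.
Proof.
move=> x; rewrite /twist_fun; have [xG0 | xG0] := boolP (inG0 x); rewrite ?xG0 //.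
by rewrite inG0_addf (negbTE xG0) -addrA -mulr2n f_order2 addr0.
Qed.

Definition twist : {perm G} := perm (can_inj twist_funK).

Lemma twistE x : twist x = if inG0 x then x else x + f.
Proof. by rewrite permE. Qed.

Lemma twist_PSM_aut : PSM_aut q f twist.
Proof.
split=> [x y | x |]; rewrite ?twistE ?inG0f //.
- rewrite inG0D; case: (inG0 x); case: (inG0 y) => //=.
  + by rewrite addrA.
  + by rewrite addrAC.
  + by rewrite addrACA -mulr2n f_order2 addr0.
- case: ifP => [_ | xG0]; rewrite ?eqQZxx // /eqQZ.
  have -> : q (x + f) - q x = (q (x + f) - q x - (B x f + 1 / 2))
    + (B x f - 1 / 2) + 1 by field.
  by have := qDf x; have := notG0_half (negbT xG0); Qint_lincomb.
Qed.

Lemma twist_F_id : F_is_id q f twist.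
Proof.
by move=> x; rewrite /G0 eqQZ0 => xG0; exists 0; rewrite twistE xG0 subrr mulr0z.
Qed.

Lemma twist_order : #[twist]%g = 2.
Proof.
have twist2 : (twist ^+ 2)%g = 1%g.
  by apply/permP => x; rewrite expgS expg1 permM !permE twist_funK.
apply/prime_nt_dvdP => //; last by rewrite order_dvdn twist2.
rewrite order_eq1; have [a a_notG0] := exists_notG0.
apply: contra_neq f_neq0 => /permP/(_ a).
by rewrite twistE perm1 (negbTE a_notG0) -{2}[a]addr0 => /addrI.
Qed.

Lemma orth_G0_eq0 a e : ~~ inG0 a ->
  (forall x, inG0 x -> B x e \is a Num.int) -> B a e \is a Num.int -> e = 0.
Proof.
move=> a_notG0 e_perp_G0 ae_int; apply: bil_nondeg => w.
have [wG0 | w_notG0] := boolP (inG0 w); first exact: e_perp_G0.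
have := bilDl (w - a) a e; have := e_perp_G0 _ (inG0_subr w_notG0 a_notG0).
rewrite subrK => *.
have -> : B w e = (B w e - (B (w - a) e + B a e)) + B (w - a) e + B a e by ring.
by Qint_lincomb.
Qed.

Section KernelElement.
Variable phi : {perm G}.
Hypotheses (phi_aut : PSM_aut q f phi) (phi_F_id : F_is_id q f phi).

Lemma ker_fix_G0 x : inG0 x -> phi x = x.
Proof.
move=> xG0; have /phi_F_id[n phix] : G0 q f x by rewrite /G0 eqQZ0.
have [fn0 | fnf] := mulrz_order2 n f_order2.
  by apply/eqP; rewrite -subr_eq0 phix fn0.
have phixE : phi x = x + f by rewrite addrC; apply/eqP; rewrite -subr_eq phix fnf.
case: phi_aut => _ /(_ x) + _; rewrite /eqQZ phixE => qxf_int.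
suff : (1 / 2 : rat) \is a Num.int by rewrite Qint_half.
have -> : 1 / 2 = (q (x + f) - q x) - (q (x + f) - q x - (B x f + 1 / 2)) - B x f.
  by ring.
by have := qDf x; Qint_lincomb.
Qed.

Lemma ker_disp_orth_G0 x y : inG0 x -> B x (phi y - y) \is a Num.int.
Proof.
move=> xG0; have := PSM_aut_bil x y phi_aut; rewrite ker_fix_G0 // => Bphi.
have -> : B x (phi y - y)
  = (B x (phi y - y) - (B x (phi y) - B x y)) + (B x (phi y) - B x y) by ring.
by have := bilBr x (phi y) y; Qint_lincomb.
Qed.

Variable a : G.
Hypothesis a_notG0 : ~~ inG0 a.

Lemma ker_shape w : phi w = if inG0 w then w else w + (phi a - a).
Proof.
have [wG0 | w_notG0] := boolP (inG0 w); first exact: ker_fix_G0.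
case: phi_aut => phiD _ _.
rewrite -{1}(subrK a w) phiD ker_fix_G0 ?inG0_subr //.
by rewrite [phi a - a]addrC addrA.
Qed.

Lemma ker_disp_cases : phi a - a = 0 \/ phi a - a = f.
Proof.
set d := phi a - a.
have d_perp_G0 x : inG0 x -> B x d \is a Num.int by apply: ker_disp_orth_G0.
have [ad_int | ad_half] : B a d \is a Num.int \/ B a d - 1 / 2 \is a Num.int.
  have aaG0 : inG0 (a + a) by rewrite inG0D eqxx.
  apply: Qint_mulr2n; have := bilDl a a d; have := d_perp_G0 _ aaG0; move=> *.
  have -> : B a d *+ 2 = B (a + a) d - (B (a + a) d - (B a d + B a d)).
    by rewrite mulr2n; ring.
  by Qint_lincomb.
- by left; apply: orth_G0_eq0 a_notG0 d_perp_G0 ad_int.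
right; apply/eqP; rewrite -subr_eq0; apply/eqP; apply: (orth_G0_eq0 a_notG0).
- move=> x xG0; have := bilBr x d f; have := d_perp_G0 x xG0; move=> *.
  have -> : B x (d - f) = (B x (d - f) - (B x d - B x f)) + B x d - B x f by ring.
  by Qint_lincomb.
- have := bilBr a d f; have := notG0_half a_notG0; move=> *.
  have -> : B a (d - f)
    = (B a (d - f) - (B a d - B a f)) + (B a d - 1 / 2) - (B a f - 1 / 2) by ring.
  by Qint_lincomb.
Qed.

Lemma ker_cases : phi = 1%g \/ phi = twist.
Proof.
have [d0 | df] := ker_disp_cases; [left | right]; apply/permP => w.
- by rewrite ker_shape d0 addr0 if_same perm1.
- by rewrite ker_shape df twistE.
Qed.

End KernelElement.

Lemma kerF_twist : kerF q f = <[twist]>%g.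
Proof.
apply/setP => phi; rewrite inE; apply/asboolP/idP => [[phi_aut phi_F_id] |].
  have [a a_notG0] := exists_notG0.
  by case: (ker_cases phi_aut phi_F_id a_notG0) => ->; rewrite ?group1 ?cycle_id.
case/cyclePmin=> i; rewrite twist_order; case: i => [|[|//]] _ ->.
- split; [split=> [x y | x |] | move=> x _; exists 0];
    by rewrite ?perm1 ?eqQZxx ?subrr ?mulr0z.
- by rewrite expg1; split; [apply: twist_PSM_aut | apply: twist_F_id].
Qed.

End KernelOfF.

Theorem mainTheorem7 (G : finZmodType) (q : G -> rat) (f : G) :
  PSM_object q f -> (kerF q f \isog [set: 'Z_2])%g.
Proof.
move=> PSM_qf; rewrite (kerF_twist PSM_qf) isog_sym.
by have := Zp_isog (twist PSM_qf); rewrite (twist_order PSM_qf).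
Qed.
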